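(* Let $\mathcal{C}_{h,\theta}$ be a hyperbolic cone with $\theta<\pi$. There exist $d>0$ and a cone neighbourhood $U_d$ of the cone-point with the following property: if $x,y$ are two points of $\mathcal{C}_{h,\theta}$ at distance $d$ from the cone-point, then the geodesic joining $x$ and $y$ does not intersect $U_d$.
   Context: For $\theta\in(0,2\pi)$ and $h>0$, let $\mathcal{S}_{h,\theta}=\{z\in\mathbb{D}: d_{\mathbb{D}}(0,z)\le h,\ 0\le\arg z\le\theta\}$ in the Poincaré disk. The hyperbolic cone $\mathcal{C}_{h,\theta}$ with cone-angle $\theta$ and slant height $h$ is the quotient of $\mathcal{S}_{h,\theta}$ obtained by gluing the segments $\arg z=0$ and $\arg z=\theta$ via $z\mapsto e^{i\theta}z$; the image of $0$ is the cone-point. A cone neighbourhood of the cone-point is a set of points at distance less than some $r>0$ from it. *)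

From Stdlib Require Import Reals List.
From Coquelicot Require Import Coquelicot.
Open Scope R_scope.

(* Points of the Poincare disk are represented as pairs (a,b) <-> a + i b. *)
Definition pt := (R * R)%type.

Definition origin : pt := (0, 0).

(* Hyperbolic distance in the Poincare disk:
   d(z,w) = 2 artanh ( |z - w| / |1 - conj(z) w| ). *)
Definition dH (z w : pt) : R :=
  let (a, b) := z in let (c, d) := w in
  let t := sqrt (((a - c)^2 + (b - d)^2) /
                 ((1 - (a*c + b*d))^2 + (a*d - b*c)^2)) in
  ln ((1 + t) / (1 - t)).

Definition in_disk (z : pt) : Prop := (fst z)^2 + (snd z)^2 < 1.

(* The sector S_{h,theta} = {z in D : d_D(0,z) <= h, 0 <= arg z <= theta}
   (the origin, whose argument is undefined, is included). *)
Definition in_sector (theta h : R) (z : pt) : Prop :=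
  in_disk z /\ dH origin z <= h /\
  exists rho phi, 0 <= rho /\ 0 <= phi <= theta /\
    z = (rho * cos phi, rho * sin phi).

Definition rot (theta : R) (z : pt) : pt :=
  (cos theta * fst z - sin theta * snd z, sin theta * fst z + cos theta * snd z).

Definition on_ray0 (z : pt) : Prop := snd z = 0 /\ 0 <= fst z.

Definition glue (theta : R) (z w : pt) : Prop :=
  z = w \/ (on_ray0 z /\ w = rot theta z) \/ (on_ray0 w /\ z = rot theta w).

(* A chain from x to y : x ~ p0, [p0,q0], q0 ~ p1, [p1,q1], ..., qn ~ y *)
Fixpoint is_chain (theta h : R) (x y : pt) (l : list (pt * pt)) : Prop :=
  match l with
  | nil => glue theta x y
  | (p, q) :: l' =>
      glue theta x p /\ in_sector theta h p /\ in_sector theta h q /\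
      is_chain theta h q y l'
  end.

Fixpoint chain_length (l : list (pt * pt)) : R :=
  match l with
  | nil => 0
  | (p, q) :: l' => dH p q + chain_length l'
  end.

(* Quotient (pseudo)metric of the gluing: infimum of lengths of chains.
   Points of the cone C_{h,theta} are the classes of sector points under
   dcone = 0; the cone point is the class of the origin. *)
Definition dcone (theta h : R) (x y : pt) : R :=
  real (Glb_Rbar (fun L => exists l, is_chain theta h x y l /\ L = chain_length l)).

(* A (minimizing) geodesic in the cone from x to y, parametrized by arc
   length on [0, dcone x y], given through sector representatives. *)
Definition is_geodesic (theta h : R) (g : R -> pt) (x y : pt) : Prop :=
  let L := dcone theta h x y in
  (forall t, 0 <= t <= L -> in_sector theta h (g t)) /\
  dcone theta h (g 0) x = 0 /\ dcone theta h (g L) y = 0 /\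
  (forall s t, 0 <= s <= L -> 0 <= t <= L ->
     dcone theta h (g s) (g t) = Rabs (s - t)).

From Stdlib Require Import Reals List Lra Psatz.
From Coquelicot Require Import Coquelicot.
Open Scope R_scope.

(* A point of the cone at distance d from the cone point is represented by a
   sector point z with dH 0 z = d, i.e. on the circle |z| = tanh (d/2), because
   along a chain dH 0 changes by at most the chain length.  For the same reason
   dH 0 is 1-Lipschitz along a geodesic of length L between two such points, so
   the geodesic stays at distance at least d - L/2 from the cone point.  Finally
   L <= dH x y, and since the arguments of x and y differ by at most theta < pi
   this is bounded by the distance D of two points of the circle at angle theta,
   which is strictly less than 2d; so r := d - D/2 works. *)

Lemma Rdiv_le_cross a b c d : 0 < b -> 0 < d -> a * d <= c * b -> a / b <= c / d.
Proof.
  intros Hb Hd H. apply (Rmult_le_reg_r (b * d)); [nra|].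
  replace (a / b * (b * d)) with (a * d) by (field; lra).
  replace (c / d * (b * d)) with (c * b) by (field; lra). exact H.
Qed.

Lemma Rdiv_lt_cross a b c d : 0 < b -> 0 < d -> a * d < c * b -> a / b < c / d.
Proof.
  intros Hb Hd H. apply (Rmult_lt_reg_r (b * d)); [nra|].
  replace (a / b * (b * d)) with (a * d) by (field; lra).
  replace (c / d * (b * d)) with (c * b) by (field; lra). exact H.
Qed.

Definition two_artanh (t : R) : R := ln ((1 + t) / (1 - t)).

Lemma two_artanh_arg_pos t : 0 <= t < 1 -> 0 < (1 + t) / (1 - t).
Proof. intros. apply Rdiv_lt_0_compat; lra. Qed.

Lemma two_artanh_0 : two_artanh 0 = 0.
Proof. unfold two_artanh. replace ((1 + 0) / (1 - 0)) with 1 by field. apply ln_1. Qed.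

Lemma two_artanh_le u v : 0 <= u -> u <= v -> v < 1 -> two_artanh u <= two_artanh v.
Proof.
  intros. apply ln_le; [apply two_artanh_arg_pos; lra|]. apply Rdiv_le_cross; nra.
Qed.

Lemma two_artanh_lt u v : 0 <= u -> u < v -> v < 1 -> two_artanh u < two_artanh v.
Proof.
  intros. apply ln_increasing; [apply two_artanh_arg_pos; lra|]. apply Rdiv_lt_cross; nra.
Qed.

Lemma two_artanh_inj u v : 0 <= u < 1 -> 0 <= v < 1 -> two_artanh u = two_artanh v -> u = v.
Proof.
  intros Hu Hv E. destruct (Rtotal_order u v) as [H|[H|H]]; auto.
  - pose proof (two_artanh_lt u v); lra.
  - pose proof (two_artanh_lt v u); lra.
Qed.

(* The addition formula tanh (a + b) = (tanh a + tanh b) / (1 + tanh a tanh b),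
   in the form of an inequality. *)
Lemma two_artanh_le_add s u t : 0 <= s < 1 -> 0 <= u < 1 -> 0 <= t < 1 ->
  s - u <= t * (1 - u * s) -> two_artanh s <= two_artanh u + two_artanh t.
Proof.
  intros Hs Hu Ht H. unfold two_artanh.
  rewrite <- ln_mult by (apply two_artanh_arg_pos; lra).
  apply ln_le; [apply two_artanh_arg_pos; lra|].
  replace ((1 + u) / (1 - u) * ((1 + t) / (1 - t)))
    with ((1 + u) * (1 + t) / ((1 - u) * (1 - t))) by (field; lra).
  apply Rdiv_le_cross; nra.
Qed.

Lemma two_artanh_double t : 0 <= t < 1 ->
  two_artanh (2 * t / (1 + t ^ 2)) = 2 * two_artanh t.
Proof.
  intros Ht. unfold two_artanh.
  replace ((1 + 2 * t / (1 + t ^ 2)) / (1 - 2 * t / (1 + t ^ 2)))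
    with ((1 + t) / (1 - t) * ((1 + t) / (1 - t))) by (field; nra).
  rewrite ln_mult by (apply two_artanh_arg_pos; lra). ring.
Qed.

Lemma two_artanh_tanh_half a : two_artanh ((exp a - 1) / (exp a + 1)) = a.
Proof.
  pose proof (exp_pos a). unfold two_artanh.
  replace ((1 + (exp a - 1) / (exp a + 1)) / (1 - (exp a - 1) / (exp a + 1)))
    with (exp a) by (field; lra).
  apply ln_exp.
Qed.

Lemma tanh_range a : 0 < a -> 0 < (exp a - 1) / (exp a + 1) < 1.
Proof.
  intros Ha. assert (He : 1 < exp a) by (rewrite <- exp_0; apply exp_increasing, Ha).
  split; [apply Rdiv_lt_0_compat; lra|].
  apply (Rmult_lt_reg_r (exp a + 1)); [lra|].
  unfold Rdiv. rewrite Rmult_assoc, Rinv_l by lra. lra.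
Qed.

Definition pdist (z w : pt) : R :=
  let (a, b) := z in let (c, d) := w in
  sqrt (((a - c)^2 + (b - d)^2) / ((1 - (a*c + b*d))^2 + (a*d - b*c)^2)).

Definition nrm (z : pt) : R := sqrt (fst z ^ 2 + snd z ^ 2).

Definition polar (r p : R) : pt := (r * cos p, r * sin p).

Lemma pdist_eq a b c d : pdist (a, b) (c, d) =
  sqrt (((a - c)^2 + (b - d)^2) / ((1 - (a*c + b*d))^2 + (a*d - b*c)^2)).
Proof. reflexivity. Qed.

Lemma dH_pdist z w : dH z w = two_artanh (pdist z w).
Proof. destruct z, w; reflexivity. Qed.

Lemma pdist_sym z w : pdist z w = pdist w z.
Proof.
  destruct z as [a b], w as [c d]. unfold pdist. f_equal. f_equal; ring.
Qed.

Lemma dH_sym z w : dH z w = dH w z.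
Proof. rewrite !dH_pdist, pdist_sym. reflexivity. Qed.

Lemma pdist_origin z : pdist origin z = nrm z.
Proof.
  destruct z as [c d]. unfold pdist, nrm, origin; simpl. f_equal. field.
Qed.

Lemma dH_origin z : dH origin z = two_artanh (nrm z).
Proof. rewrite dH_pdist, pdist_origin. reflexivity. Qed.

Lemma nrm_sq z : nrm z ^ 2 = fst z ^ 2 + snd z ^ 2.
Proof. unfold nrm. rewrite pow2_sqrt; [reflexivity | nra]. Qed.

Lemma nrm_polar r p : 0 <= r -> nrm (polar r p) = r.
Proof.
  intros Hr. unfold nrm, polar; simpl.
  replace (r * cos p * (r * cos p * 1) + r * sin p * (r * sin p * 1))
    with (r ^ 2 * (sin p ^ 2 + cos p ^ 2)) by ring.
  rewrite <- !Rsqr_pow2, sin2_cos2, Rmult_1_r. apply sqrt_Rsqr, Hr.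
Qed.

Lemma nrm_rot th z : nrm (rot th z) = nrm z.
Proof.
  destruct z as [a b]. unfold nrm, rot; simpl. f_equal.
  replace ((cos th * a - sin th * b) * ((cos th * a - sin th * b) * 1) +
           (sin th * a + cos th * b) * ((sin th * a + cos th * b) * 1))
    with ((sin th ^ 2 + cos th ^ 2) * (a * (a * 1) + b * (b * 1))) by ring.
  rewrite <- !Rsqr_pow2, sin2_cos2. ring.
Qed.

Lemma nrm_range z : in_disk z -> 0 <= nrm z < 1.
Proof.
  intros Hz. pose proof (nrm_sq z). pose proof (sqrt_pos (fst z ^ 2 + snd z ^ 2)).
  unfold in_disk in Hz. fold (nrm z) in *. split; [lra | nra].
Qed.

(* [|1 - conj(z) w|^2 = |z - w|^2 + (1 - |z|^2) (1 - |w|^2)] *)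
Lemma pdist_sq a b c d : in_disk (a, b) -> in_disk (c, d) ->
  pdist (a, b) (c, d) ^ 2 =
  ((a - c)^2 + (b - d)^2) /
  ((a - c)^2 + (b - d)^2 + (1 - (a^2 + b^2)) * (1 - (c^2 + d^2))).
Proof.
  unfold in_disk; cbn [fst snd]; intros Hz Hw. rewrite pdist_eq.
  replace ((1 - (a*c + b*d))^2 + (a*d - b*c)^2)
    with ((a - c)^2 + (b - d)^2 + (1 - (a^2 + b^2)) * (1 - (c^2 + d^2))) by ring.
  rewrite pow2_sqrt; [reflexivity|].
  assert (0 < (1 - (a^2 + b^2)) * (1 - (c^2 + d^2))) by (apply Rmult_lt_0_compat; lra).
  pose proof (pow2_ge_0 (a - c)). pose proof (pow2_ge_0 (b - d)).
  apply Rdiv_le_0_compat; lra.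
Qed.

Lemma pdist_range z w : in_disk z -> in_disk w -> 0 <= pdist z w < 1.
Proof.
  destruct z as [a b], w as [c d]. intros Hz Hw.
  pose proof (pdist_sq a b c d Hz Hw) as E.
  assert (H0 : 0 <= pdist (a, b) (c, d)) by apply sqrt_pos.
  unfold in_disk in Hz, Hw; cbn [fst snd] in Hz, Hw.
  set (X := (a - c)^2 + (b - d)^2) in E.
  set (P := (1 - (a^2 + b^2)) * (1 - (c^2 + d^2))) in E.
  assert (HX : 0 <= X)
    by (unfold X; pose proof (pow2_ge_0 (a - c)); pose proof (pow2_ge_0 (b - d)); lra).
  assert (HP : 0 < P) by (apply Rmult_lt_0_compat; lra).
  assert (Hlt : X / (X + P) < 1)
    by (apply (Rmult_lt_reg_r (X + P)); [lra|]; field_simplify; lra).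
  split; [exact H0|]. nra.
Qed.

Lemma nrm_sub_le_pdist z w : in_disk z -> in_disk w ->
  nrm w - nrm z <= pdist z w * (1 - nrm z * nrm w).
Proof.
  destruct z as [a b], w as [c d]. intros Hz Hw.
  pose proof (pdist_sq a b c d Hz Hw) as E.
  pose proof (pdist_range _ _ Hz Hw) as Hd.
  pose proof (nrm_range _ Hz) as Hu. pose proof (nrm_range _ Hw) as Hs.
  pose proof (nrm_sq (a, b)) as Hu2. pose proof (nrm_sq (c, d)) as Hs2.
  assert (CS : a * c + b * d <= nrm (a, b) * nrm (c, d)).
  { unfold nrm; cbn [fst snd]. rewrite <- !Rsqr_pow2. apply sqrt_cauchy. }
  cbn [fst snd] in Hu2, Hs2.
  set (u := nrm (a, b)) in *. set (s := nrm (c, d)) in *.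
  set (t := pdist (a, b) (c, d)) in *.
  rewrite <- Hu2, <- Hs2 in E.
  set (X := (a - c)^2 + (b - d)^2) in E.
  set (P := (1 - u ^ 2) * (1 - s ^ 2)) in E.
  assert (HP : 0 < P) by (apply Rmult_lt_0_compat; nra).
  assert (HX : (s - u) ^ 2 <= X).
  { replace X with (u ^ 2 + s ^ 2 - 2 * (a * c + b * d)) by (unfold X; rewrite Hu2, Hs2; ring).
    replace ((s - u) ^ 2) with (u ^ 2 + s ^ 2 - 2 * (u * s)) by ring. lra. }
  assert (Hsu : 0 <= 1 - u * s) by nra.
  destruct (Rle_or_lt s u) as [Hle|Hlt]; [pose proof (Rmult_le_pos t (1 - u * s)); lra|].
  apply Rsqr_incr_0_var; [|apply Rmult_le_pos; lra].
  rewrite !Rsqr_pow2, Rpow_mult_distr, E.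
  replace ((1 - u * s) ^ 2) with ((s - u) ^ 2 + P) by (unfold P; ring).
  assert (HX0 : 0 <= X) by (pose proof (pow2_ge_0 (s - u)); lra).
  apply (Rmult_le_reg_r (X + P)); [lra|].
  replace (X / (X + P) * ((s - u) ^ 2 + P) * (X + P)) with (X * ((s - u) ^ 2 + P))
    by (field; lra).
  assert (0 <= (X - (s - u) ^ 2) * P) by (apply Rmult_le_pos; lra).
  lra.
Qed.

Lemma dH_origin_le z w : in_disk z -> in_disk w -> dH origin w <= dH origin z + dH z w.
Proof.
  intros Hz Hw. rewrite !dH_origin, dH_pdist.
  apply two_artanh_le_add; try (apply nrm_range; assumption).
  - apply pdist_range; assumption.
  - apply nrm_sub_le_pdist; assumption.
Qed.

Lemma cos_le_cos x y : 0 <= x -> x <= y -> y <= PI -> cos y <= cos x.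
Proof.
  intros. destruct (Rle_lt_or_eq_dec x y) as [Hlt | ->]; [assumption | | lra].
  left. apply cos_decreasing_1; lra.
Qed.

Lemma cos_sub_ge p1 p2 th : 0 <= p1 <= th -> 0 <= p2 <= th -> th <= PI ->
  cos th <= cos (p1 - p2).
Proof.
  intros. destruct (Rle_or_lt p2 p1).
  - apply cos_le_cos; lra.
  - replace (p1 - p2) with (- (p2 - p1)) by ring. rewrite cos_neg. apply cos_le_cos; lra.
Qed.

Lemma cos_gt_m1 th : 0 <= th < PI -> -1 < cos th.
Proof. intros. rewrite <- cos_PI. apply cos_decreasing_1; lra. Qed.

Definition chord_pdist (rho c : R) : R :=
  sqrt (2 * rho ^ 2 * (1 - c) / (2 * rho ^ 2 * (1 - c) + (1 - rho ^ 2) ^ 2)).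

Lemma pdist_polar rho p1 p2 :
  pdist (polar rho p1) (polar rho p2) = chord_pdist rho (cos (p1 - p2)).
Proof.
  unfold polar, chord_pdist. rewrite pdist_eq, cos_minus.
  assert (N1 : cos p1 ^ 2 + sin p1 ^ 2 = 1) by (rewrite <- !Rsqr_pow2, Rplus_comm; apply sin2_cos2).
  assert (N2 : cos p2 ^ 2 + sin p2 ^ 2 = 1) by (rewrite <- !Rsqr_pow2, Rplus_comm; apply sin2_cos2).
  set (X := (rho * cos p1 - rho * cos p2) ^ 2 + (rho * sin p1 - rho * sin p2) ^ 2).
  assert (HX : X = 2 * rho ^ 2 * (1 - (cos p1 * cos p2 + sin p1 * sin p2))).
  { replace X with (rho ^ 2 * (cos p1 ^ 2 + sin p1 ^ 2) + rho ^ 2 * (cos p2 ^ 2 + sin p2 ^ 2)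
                    - 2 * rho ^ 2 * (cos p1 * cos p2 + sin p1 * sin p2)) by (unfold X; ring).
    rewrite N1, N2. ring. }
  replace ((1 - (rho * cos p1 * (rho * cos p2) + rho * sin p1 * (rho * sin p2))) ^ 2 +
           (rho * cos p1 * (rho * sin p2) - rho * sin p1 * (rho * cos p2)) ^ 2)
    with (X + (1 - rho ^ 2 * (cos p1 ^ 2 + sin p1 ^ 2)) * (1 - rho ^ 2 * (cos p2 ^ 2 + sin p2 ^ 2)))
    by (unfold X; ring).
  rewrite N1, N2, HX. f_equal. f_equal. ring.
Qed.

Lemma chord_pdist_m1 rho : 0 <= rho -> chord_pdist rho (-1) = 2 * rho / (1 + rho ^ 2).
Proof.
  intros Hr. unfold chord_pdist.
  assert (0 < 1 + rho ^ 2) by (pose proof (pow2_ge_0 rho); lra).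
  replace (2 * rho ^ 2 * (1 - -1) + (1 - rho ^ 2) ^ 2) with ((1 + rho ^ 2) ^ 2) by ring.
  replace (2 * rho ^ 2 * (1 - -1) / (1 + rho ^ 2) ^ 2)
    with ((2 * rho / (1 + rho ^ 2)) ^ 2) by (field; lra).
  apply sqrt_pow2. apply Rdiv_le_0_compat; lra.
Qed.

Lemma chord_pdist_lt rho c c' : 0 < rho < 1 -> c < c' <= 1 ->
  chord_pdist rho c' < chord_pdist rho c.
Proof.
  intros Hr Hc. unfold chord_pdist.
  assert (HK : 0 < (1 - rho ^ 2) ^ 2) by (apply pow_lt; nra).
  assert (Hrho : 0 < rho ^ 2) by (apply pow_lt; lra).
  assert (HX' : 0 <= 2 * rho ^ 2 * (1 - c')) by nra.
  assert (HXX : 2 * rho ^ 2 * (1 - c') < 2 * rho ^ 2 * (1 - c)) by nra.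
  apply sqrt_lt_1_alt. split; [apply Rdiv_le_0_compat; lra|].
  apply Rdiv_lt_cross; [lra | lra |].
  set (K := (1 - rho ^ 2) ^ 2) in *.
  set (X := 2 * rho ^ 2 * (1 - c)) in *. set (X' := 2 * rho ^ 2 * (1 - c')) in *.
  replace (X' * (X + K)) with (X' * X + X' * K) by ring.
  replace (X * (X' + K)) with (X' * X + X * K) by ring.
  apply Rplus_lt_compat_l, Rmult_lt_compat_r; assumption.
Qed.

Lemma chord_pdist_le rho c c' : 0 < rho < 1 -> c <= c' <= 1 ->
  chord_pdist rho c' <= chord_pdist rho c.
Proof.
  intros Hr Hc. destruct (Rle_lt_or_eq_dec c c') as [Hlt | ->]; [lra | | lra].
  left. apply chord_pdist_lt; lra.
Qed.

Lemma double_ratio_lt_1 t : 0 <= t < 1 -> 2 * t / (1 + t ^ 2) < 1.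
Proof.
  intros Ht. assert (H : 0 < 1 + t ^ 2) by (pose proof (pow2_ge_0 t); lra).
  apply (Rmult_lt_reg_r (1 + t ^ 2)); [exact H|].
  unfold Rdiv. rewrite Rmult_assoc, Rinv_l by lra. nra.
Qed.

Lemma chord_pdist_lt_antipodal rho c : 0 < rho < 1 -> -1 < c <= 1 ->
  chord_pdist rho c < 2 * rho / (1 + rho ^ 2).
Proof.
  intros Hr Hc. rewrite <- chord_pdist_m1 by lra. apply chord_pdist_lt; lra.
Qed.

Lemma two_artanh_chord_lt rho c : 0 < rho < 1 -> -1 < c <= 1 ->
  two_artanh (chord_pdist rho c) < 2 * two_artanh rho.
Proof.
  intros Hr Hc. rewrite <- two_artanh_double by lra.
  apply two_artanh_lt;
    [apply sqrt_pos | apply chord_pdist_lt_antipodal; assumption | apply double_ratio_lt_1; lra].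
Qed.

Lemma dH_polar_le rho th p1 p2 : 0 < rho < 1 -> 0 <= p1 <= th -> 0 <= p2 <= th -> th < PI ->
  dH (polar rho p1) (polar rho p2) <= two_artanh (chord_pdist rho (cos th)).
Proof.
  intros Hr Hp1 Hp2 Hth. rewrite dH_pdist, pdist_polar.
  assert (Hc : -1 < cos th <= 1) by (split; [apply cos_gt_m1; lra | apply COS_bound]).
  apply two_artanh_le.
  - apply sqrt_pos.
  - apply chord_pdist_le; [exact Hr|]. split; [apply cos_sub_ge; lra | apply COS_bound].
  - eapply Rlt_trans; [apply chord_pdist_lt_antipodal; assumption|].
    apply double_ratio_lt_1; lra.
Qed.

Lemma dH_origin_glue th z w : glue th z w -> dH origin z = dH origin w.
Proof.
  intros [-> | [[_ ->] | [_ ->]]]; rewrite !dH_origin, ?nrm_rot; reflexivity.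
Qed.

Lemma chain_length_ge th h l x y : is_chain th h x y l ->
  Rabs (dH origin y - dH origin x) <= chain_length l.
Proof.
  revert x. induction l as [|[p q] l IH]; intros x Hc; cbn [is_chain chain_length] in *.
  - rewrite (dH_origin_glue _ _ _ Hc), Rminus_diag, Rabs_R0. lra.
  - destruct Hc as [Hxp [[Hp _] [[Hq _] Hl]]].
    specialize (IH _ Hl). rewrite (dH_origin_glue _ _ _ Hxp).
    pose proof (dH_origin_le p q Hp Hq).
    pose proof (dH_origin_le q p Hq Hp). rewrite (dH_sym q p) in *.
    revert IH. unfold Rabs. repeat destruct Rcase_abs; lra.
Qed.

Lemma Glb_Rbar_between (E : R -> Prop) m v : E v -> (forall w, E w -> m <= w) ->
  m <= real (Glb_Rbar E) <= v.
Proof.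
  intros Hv Hm. destruct (Glb_Rbar_correct E) as [Hlb Hglb].
  pose proof (Hlb v Hv) as Hle.
  assert (Hge : Rbar_le m (Glb_Rbar E)) by (apply Hglb; intros w Hw; apply Hm, Hw).
  destruct (Glb_Rbar E); simpl in *; try contradiction. lra.
Qed.

Lemma dcone_bounds th h z w : in_sector th h z -> in_sector th h w ->
  Rabs (dH origin w - dH origin z) <= dcone th h z w <= dH z w.
Proof.
  intros Hz Hw. apply Glb_Rbar_between.
  - exists ((z, w) :: nil). cbn [is_chain chain_length]. split; [|ring].
    split; [left; reflexivity | split; [exact Hz | split; [exact Hw | left; reflexivity]]].
  - intros L [l [Hl ->]]. eapply chain_length_ge; eassumption.
Qed.

Lemma dH_origin_origin : dH origin origin = 0.
Proof.
  rewrite dH_origin. replace (nrm origin) with 0; [apply two_artanh_0|].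
  unfold nrm, origin; simpl. rewrite Rmult_0_l, Rplus_0_l, sqrt_0. reflexivity.
Qed.

Lemma origin_in_sector th h : 0 <= th -> 0 <= h -> in_sector th h origin.
Proof.
  intros. split; [|split].
  - unfold in_disk, origin; simpl; lra.
  - rewrite dH_origin_origin. assumption.
  - exists 0, 0. split; [lra | split; [lra|]]. unfold origin. f_equal; ring.
Qed.

Lemma dcone_origin th h z : 0 <= th -> 0 <= h -> in_sector th h z ->
  dcone th h origin z = dH origin z.
Proof.
  intros Hth Hh Hz.
  pose proof (dcone_bounds th h origin z (origin_in_sector th h Hth Hh) Hz) as Hb.
  rewrite dH_origin_origin, Rminus_0_r in Hb. pose proof (Rle_abs (dH origin z)). lra.
Qed.

(* The distance to the origin is 1-Lipschitz along the geodesic, and it equals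
   [dH origin x] at time 0 and [dH origin y] at time [dcone x y]. *)
Lemma geodesic_dist_origin_ge th h x y g t :
  in_sector th h x -> in_sector th h y -> is_geodesic th h g x y ->
  0 <= t <= dcone th h x y ->
  dH origin x + dH origin y - dcone th h x y <= 2 * dH origin (g t).
Proof.
  intros Hx Hy [Hsec [H0 [HL Hiso]]] Ht. set (L := dcone th h x y) in *. clearbody L.
  assert (HL0 : 0 <= L) by lra.
  pose proof (Hsec t Ht) as St.
  pose proof (dcone_bounds _ _ _ _ (Hsec 0 ltac:(lra)) Hx) as [Ex _].
  pose proof (dcone_bounds _ _ _ _ (Hsec L ltac:(lra)) Hy) as [Ey _].
  pose proof (dcone_bounds _ _ _ _ St (Hsec 0 ltac:(lra))) as [E0 _].
  pose proof (dcone_bounds _ _ _ _ St (Hsec L ltac:(lra))) as [EL _].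
  rewrite H0 in Ex. rewrite HL in Ey.
  rewrite Hiso, Rminus_0_r, (Rabs_right t) in E0 by (try split; lra).
  rewrite Hiso, (Rabs_left1 (t - L)) in EL by (try split; lra).
  revert Ex Ey E0 EL. unfold Rabs. repeat destruct Rcase_abs; lra.
Qed.

Lemma sector_at_dist th h x rho : in_sector th h x -> 0 <= rho < 1 ->
  dH origin x = two_artanh rho -> exists p, 0 <= p <= th /\ x = polar rho p.
Proof.
  intros [Hd [_ [r [p [Hr [Hp ->]]]]]] Hrho E. exists p. split; [exact Hp|].
  fold (polar r p) in *. rewrite dH_origin in E.
  pose proof (nrm_range _ Hd) as Hn. rewrite nrm_polar in Hn, E by exact Hr.
  rewrite (two_artanh_inj r rho); [reflexivity | lra | exact Hrho | exact E].
Qed.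

Theorem lemma2p8 (h theta : R) (hh : 0 < h) (htheta0 : 0 < theta)
  (htheta : theta < PI) :
  exists d, 0 < d /\ d < h /\
  exists r, 0 < r /\
  forall x y : pt,
    in_sector theta h x -> in_sector theta h y ->
    dcone theta h origin x = d -> dcone theta h origin y = d ->
    forall g : R -> pt, is_geodesic theta h g x y ->
    forall t, 0 <= t <= dcone theta h x y ->
      r <= dcone theta h origin (g t).
Proof.
  set (rho := (exp (h / 2) - 1) / (exp (h / 2) + 1)).
  assert (Hrho : 0 < rho < 1) by (apply tanh_range; lra).
  assert (Hd : two_artanh rho = h / 2) by apply two_artanh_tanh_half.
  set (D := two_artanh (chord_pdist rho (cos theta))).
  assert (HD : D < 2 * (h / 2)).
  { rewrite <- Hd. apply two_artanh_chord_lt; [exact Hrho|].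
    split; [apply cos_gt_m1; lra | apply COS_bound]. }
  exists (h / 2). split; [lra | split; [lra|]].
  exists (h / 2 - D / 2). split; [lra|].
  intros x y Hx Hy Hdx Hdy g Hg t Ht.
  assert (Hgt : in_sector theta h (g t)) by (apply (proj1 Hg); exact Ht).
  rewrite dcone_origin in Hdx, Hdy |- * by (assumption || lra).
  destruct (sector_at_dist _ _ _ rho Hx ltac:(lra) ltac:(congruence)) as [p1 [Hp1 Ex]].
  destruct (sector_at_dist _ _ _ rho Hy ltac:(lra) ltac:(congruence)) as [p2 [Hp2 Ey]].
  assert (HL : dcone theta h x y <= D).
  { eapply Rle_trans; [apply (dcone_bounds _ _ _ _ Hx Hy)|].
    rewrite Ex, Ey. apply dH_polar_le; assumption. }
  pose proof (geodesic_dist_origin_ge _ _ _ _ _ _ Hx Hy Hg Ht). lra.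
Qed.
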